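(* Let $q$ be a power of the prime $p$ and $n$ a positive integer. Let $h\in \mathbb{F}_q[x]$ and $f, k\in\mathbb{F}_{q^n}[x]$ with $k(\mathbb{F}_q)\subseteq \mathbb{F}_q^*$, and let $P(x)=f(\mathrm{Tr}_{q^n/q}(x))+k(\mathrm{Tr}_{q^n/q}(x))\cdot L_h(x)$. Then $P$ is a permutation polynomial of $\mathbb{F}_{q^n}$ if and only if: (1) $\gcd\left(h(x), \frac{x^n-1}{x-1}\right)=1$; and (2) $Q(x):=T_n[f](x)+k(x)\cdot h(1)\cdot x$ induces a permutation of $\mathbb{F}_q$. Moreover, in this case, if $R\in\mathbb{F}_q[x]$ induces the inverse permutation of $Q$ on $\mathbb{F}_q$, then the inverse of the permutation of $\mathbb{F}_{q^n}$ induced by $P$ is induced by $$P_0(x)=F(\mathrm{Tr}_{q^n/q}(x))+k(R(\mathrm{Tr}_{q^n/q}(x)))^{q-2}\cdot L_H(x),$$ where $H\in \mathbb{F}_q[x]$ and $F\in \mathbb{F}_{q^n}[x]$ are as follows: (i) if $p\mid n$: $H$ is the unique polynomial of degree at most $n-1$ with $h(x)H(x)\equiv 1\pmod{x^n-1}$ (such $H$ exists, since when $p\mid n$ condition (1) is equivalent to $\gcd(h(x),x^n-1)=1$), and $F$ is any polynomial with $F(x)\equiv -k(R(x))^{q-2}\cdot L_H(f(R(x)))\pmod{x^q-x}$; (ii) if $p\nmid n$: $H$ is the unique polynomial of degree at most $n-2$ with $h(x)H(x)\equiv 1\pmod{\frac{x^n-1}{x-1}}$, and $F$ is any polynomial with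 $F(x)\equiv M(R(x))\pmod{x^q-x}$, where $M(x)=-k(x)^{q-2}\cdot L_H(f(x))+x\cdot\frac{1-h(1)H(1)}{n}$.
   Context: For $u(x)=\sum_{i=0}^m a_i x^i\in\mathbb{F}_q[x]$, its linearized $q$-associate is $L_u(x)=\sum_{i=0}^m a_i x^{q^i}$. $\mathrm{Tr}_{q^n/q}(x)=x+x^q+\cdots+x^{q^{n-1}}$ is the trace polynomial. For $f(x)=\sum_{i=0}^d a_i x^i\in\mathbb{F}_{q^n}[x]$, define $T_n[f](x)=\sum_{i=0}^d \mathrm{Tr}_{q^n/q}(a_i)x^i\in\mathbb{F}_q[x]$. A permutation polynomial of a finite field is a polynomial inducing a bijection of it. *)

From mathcomp Require Import all_boot all_order all_algebra all_field.
Set Implicit Arguments. Unset Strict Implicit. Unset Printing Implicit Defensive.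
Import GRing.Theory.
Local Open Scope ring_scope.

(* Ambient field L plays the role of F_{q^n}; F_q is the subfield of fixed
   points of x |-> x^q. *)
Section Defs.
Variable L : finFieldType.

Definition Fq (q : nat) : {pred L} := [pred x : L | x ^+ q == x].

Definition trace (q n : nat) (x : L) : L := \sum_(i < n) x ^+ (q ^ i).

Definition linq (q : nat) (u : {poly L}) : {poly L} :=
  \sum_(i < size u) u`_i *: 'X^(q ^ i).

Definition Tn (q n : nat) (f : {poly L}) : {poly L} :=
  \poly_(i < size f) trace q n f`_i.

Definition perm_on_set (S : {pred L}) (u : {poly L}) : Prop :=
  {in S, forall x, u.[x] \in S} /\ {in S &, injective (fun x => u.[x])}.

Definition is_pp (u : {poly L}) : Prop := injective (fun x => u.[x]).
End Defs.

From HB Require Import structures.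
From mathcomp Require Import all_boot all_order all_algebra all_field.
From mathcomp Require Import ring.

Set Implicit Arguments.
Unset Strict Implicit.
Unset Printing Implicit Defensive.
Import GRing.Theory.
Local Open Scope ring_scope.

(* Write L_u for the linearized q-associate of u and Phi = (X^n - 1)/(X - 1),
   so that Tr = L_Phi. Linearized polynomials compose as their associates
   multiply, L_{ab} = L_a o L_b, as soon as b is over F_q. Hence
   Tr o L_h = h(1) Tr and Tr (P x) = Q (Tr x). So P is injective iff Q is
   injective on F_q and P is injective on every fibre of Tr; on a fibre,
   P x - P y = k(t) L_h (x - y), and L_h is injective on ker Tr = ker L_Phi
   iff gcd(h, Phi) = 1. For the inverse,
   k(t)^(q-2) L_H (P x) = k(t)^(q-2) L_H (f t) + L_{hH} x, where L_{hH} x is x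
   when hH = 1 mod X^n - 1 and x + a(1) Tr x when hH = a Phi + 1; the F-term
   of the inverse cancels the rest. *)

Definition pchar_exp (R : comNzRingType) (e : nat) of [pchar R].-nat e :=
  fun x : R => x ^+ e.
Arguments pchar_exp {R e}.

Section PcharExp.
Variables (R : comNzRingType) (e : nat) (eR : [pchar R].-nat e).

Lemma pchar_exp_is_nmod_morphism : nmod_morphism (pchar_exp eR).
Proof.
by split=> [|x y]; rewrite /pchar_exp ?exprDn_pchar // expr0n; case: e eR.
Qed.

Lemma pchar_exp_is_monoid_morphism : monoid_morphism (pchar_exp eR).
Proof. by split=> [|x y]; rewrite /pchar_exp ?expr1n ?exprMn. Qed.

End PcharExp.

HB.instance Definition _ (R : comNzRingType) e (eR : [pchar R].-nat e) :=
  GRing.isNmodMorphism.Build R R (pchar_exp eR)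
    (@pchar_exp_is_nmod_morphism R e eR).
HB.instance Definition _ (R : comNzRingType) e (eR : [pchar R].-nat e) :=
  GRing.isMonoidMorphism.Build R R (pchar_exp eR)
    (@pchar_exp_is_monoid_morphism R e eR).

Lemma onto_in_inj (T : finType) (A : {pred T}) (g : T -> T) :
  {in A, forall s, exists2 t, t \in A & g t = s} -> {in A &, injective g}.
Proof.
move=> gA; apply/imset_injP; rewrite eqn_leq leq_imset_card subset_leq_card //.
by apply/subsetP => s /gA [t tA <-]; exact: imset_f.
Qed.

Section Subfield.
Variables (L : finFieldType) (q : nat).
Hypothesis qchar : [pchar L].-nat q.
Implicit Types (x y c s t : L) (f g h u a b d : {poly L}).

Lemma pchar_nat_expq i : [pchar L].-nat (q ^ i)%N.
Proof. by rewrite pnatX qchar. Qed.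

Definition frobq i : {rmorphism L -> L} := pchar_exp (pchar_nat_expq i).

Lemma frobqE i x : frobq i x = x ^+ (q ^ i). Proof. by []. Qed.

Lemma frobq1E x : frobq 1 x = x ^+ q. Proof. by rewrite frobqE expn1. Qed.

Lemma Fq_divring_closed : divring_closed (@Fq L q).
Proof.
split=> [|x y|x y]; rewrite !inE ?expr1n // => /eqP xq /eqP yq.
  by rewrite exprDn_pchar // exprNn_pchar // xq yq.
by rewrite exprMn exprVn xq yq.
Qed.

HB.instance Definition _ :=
  GRing.isDivringClosed.Build L (@Fq L q) Fq_divring_closed.

Lemma Fq_exprq x : x \in Fq q -> x ^+ q = x.
Proof. by rewrite inE => /eqP. Qed.

Lemma Fq_exprqX i x : x \in Fq q -> x ^+ (q ^ i) = x.
Proof.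
move=> /Fq_exprq xq; elim: i => [|i IHi]; first by rewrite expr1.
by rewrite expnSr exprM IHi xq.
Qed.

Lemma polyOver_FqP u :
  reflect (map_poly (frobq 1) u = u) (u \is a polyOver (Fq q)).
Proof.
apply: (iffP polyOverP) => [uFq|uF i].
  by apply/polyP => i; rewrite coef_map /= frobq1E Fq_exprq.
by rewrite inE -{2}uF coef_map /= frobq1E.
Qed.

Lemma Fq_divp a b : a \is a polyOver (Fq q) -> b \is a polyOver (Fq q) ->
  a %/ b \is a polyOver (Fq q).
Proof.
move=> /polyOver_FqP aF /polyOver_FqP bF.
by apply/polyOver_FqP; rewrite map_divp aF bF.
Qed.

Lemma Fq_modp a b : a \is a polyOver (Fq q) -> b \is a polyOver (Fq q) ->
  a %% b \is a polyOver (Fq q).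
Proof.
move=> /polyOver_FqP aF /polyOver_FqP bF.
by apply/polyOver_FqP; rewrite map_modp aF bF.
Qed.

Lemma Fq_gcdp a b : a \is a polyOver (Fq q) -> b \is a polyOver (Fq q) ->
  gcdp a b \is a polyOver (Fq q).
Proof.
move=> /polyOver_FqP aF /polyOver_FqP bF.
by apply/polyOver_FqP; rewrite gcdp_map aF bF.
Qed.

Lemma Fq_modp_inverse g a : g != 0 -> coprimep a g ->
    a \is a polyOver (Fq q) -> g \is a polyOver (Fq q) ->
  exists2 b, b \is a polyOver (Fq q)
           & (size b < size g)%N /\ (a * b) %% g = 1 %% g.
Proof.
move=> g0 ag aFq gFq; pose e := egcdp a g.
have [e1Fq e2Fq] : e.1 \is a polyOver (Fq q) /\ e.2 \is a polyOver (Fq q).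
  have /polyOver_FqP aF := aFq; have /polyOver_FqP gF := gFq.
  have := egcdp_map (frobq 1) a g; rewrite aF gF => eF.
  by split; apply/polyOver_FqP; [exact: esym (congr1 fst eF)
                                 | exact: esym (congr1 snd eF)].
have /size_poly1P [c c0 ec] : size (e.1 * a + e.2 * g) == 1%N.
  by rewrite -(eqp_size (egcdpE a g)) -coprimep_def.
have cFq : c \in Fq q.
  have /polyOverP/(_ 0%N) := rpredD (rpredM e1Fq aFq) (rpredM e2Fq gFq).
  by rewrite ec coefC.
exists ((c^-1 *: e.1) %% g); first by rewrite Fq_modp ?polyOverZ ?rpredV.
split; first by rewrite ltn_modp.
rewrite modp_mul; have -> : a * (c^-1 *: e.1) = 1 - (c^-1 *: e.2) * g.
  rewrite -scalerAr mulrC -scalerAl -[e.1 * a](addrK (e.2 * g)) ec scalerBr.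
  by rewrite -mul_polyC -polyCM mulVf // mul_polyC scalerAl.
by rewrite modpD modpN modp_mull subr0.
Qed.

Lemma dvdp_XqX_root d s : s \in Fq q -> ('X^q - 'X) %| d -> d.[s] = 0.
Proof.
move=> /Fq_exprq sq /dvdpP [w ->].
by rewrite hornerM hornerD hornerN hornerXn hornerX sq subrr mulr0.
Qed.

Lemma linq_widen N u : (size u <= N)%N ->
  linq q u = \sum_(i < N) u`_i *: 'X^(q ^ i).
Proof.
move=> uN; rewrite /linq (big_ord_widen N (fun i => u`_i *: 'X^(q ^ i)) uN).
rewrite big_mkcond; apply: eq_bigr => i _.
by case: ltnP => // ?; rewrite nth_default ?scale0r.
Qed.

Lemma linq_is_semilinear : semilinear (@linq L q).
Proof.
split=> [c u|u v].
  rewrite (linq_widen (size_scale_leq c u)) /linq scaler_sumr.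
  by apply: eq_bigr => i _; rewrite coefZ scalerA.
rewrite (linq_widen (leq_maxl (size u) (size v))).
rewrite (linq_widen (leq_maxr (size u) (size v))).
rewrite (linq_widen (size_polyD u v)) -big_split.
by apply: eq_bigr => i _; rewrite coefD scalerDl.
Qed.

HB.instance Definition _ := GRing.isSemilinear.Build L {poly L} {poly L} _
  (@linq L q) linq_is_semilinear.

Lemma linqXn i : linq q ('X^i : {poly L}) = 'X^(q ^ i).
Proof.
rewrite /linq size_polyXn big_ord_recr /= coefXn eqxx scale1r big1 ?add0r //.
by move=> j _; rewrite coefXn ltn_eqF ?scale0r.
Qed.

Lemma linqC c : linq q c%:P = c *: 'X.
Proof.
by rewrite -[c%:P]mulr1 mul_polyC linearZ /= -(expr0 'X) linqXn expn0 expr1.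
Qed.

Lemma horner_linq u x :
  (linq q u).[x] = \sum_(i < size u) u`_i * x ^+ (q ^ i).
Proof.
by rewrite horner_sum; apply: eq_bigr => i _; rewrite hornerZ hornerXn.
Qed.

Lemma linq_hornerD u x y :
  (linq q u).[x + y] = (linq q u).[x] + (linq q u).[y].
Proof.
rewrite !horner_linq -big_split; apply: eq_bigr => i _.
by rewrite -!frobqE rmorphD mulrDr.
Qed.

Lemma linq_horner0 u : (linq q u).[0] = 0.
Proof.
by rewrite horner_linq big1 // => i _; rewrite -frobqE rmorph0 mulr0.
Qed.

Lemma linq_hornerN u x : (linq q u).[- x] = - (linq q u).[x].
Proof.
by apply/eqP; rewrite -addr_eq0 -linq_hornerD addNr linq_horner0.
Qed.

Lemma linq_hornerB u x y :
  (linq q u).[x - y] = (linq q u).[x] - (linq q u).[y].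
Proof. by rewrite linq_hornerD linq_hornerN. Qed.

Lemma linq_hornerZ u c x : c \in Fq q ->
  (linq q u).[c * x] = c * (linq q u).[x].
Proof.
move=> cFq; rewrite !horner_linq mulr_sumr; apply: eq_bigr => i _.
by rewrite exprMn (Fq_exprqX _ cFq) mulrCA.
Qed.

Lemma linq_horner_Fq u t : t \in Fq q -> (linq q u).[t] = u.[1] * t.
Proof.
move=> tFq; rewrite horner_linq horner_coef mulr_suml.
by apply: eq_bigr => i _; rewrite Fq_exprqX // expr1n mulr1.
Qed.

Lemma linq_hornerMX u x : (linq q (u * 'X)).[x] = (linq q u).[x ^+ q].
Proof.
rewrite !horner_linq; have [->|u0] := eqVneq u 0.
  by rewrite mul0r size_poly0 !big_ord0.
rewrite size_mulX // big_ord_recl coefMX /= mul0r add0r.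
by apply: eq_bigr => i _; rewrite /bump add1n coefMX /= expnS exprM.
Qed.

Lemma linq_horner_exprq u x : u \is a polyOver (Fq q) ->
  (linq q u).[x] ^+ q = (linq q u).[x ^+ q].
Proof.
move=> /polyOverP uFq; rewrite !horner_linq -[LHS]frobq1E rmorph_sum.
apply: eq_bigr => i _.
by rewrite rmorphM /= !frobq1E Fq_exprq // -!exprM mulnC.
Qed.

Lemma linq_hornerM a b x : b \is a polyOver (Fq q) ->
  (linq q (a * b)).[x] = (linq q a).[(linq q b).[x]].
Proof.
elim/poly_ind: a b => [|a c IHa] b bFq; first by rewrite mul0r linear0 !horner0.
have XbFq : 'X * b \is a polyOver (Fq q) by rewrite rpredM ?polyOverX.
rewrite mulrDl -mulrA mul_polyC !linearD /= !hornerD IHa // linqC.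
rewrite linearZ /= !hornerZ hornerX [_ * b]mulrC !linq_hornerMX.
by rewrite linq_horner_exprq.
Qed.

Section Trace.
Variable n : nat.
Hypotheses (n_gt0 : (0 < n)%N) (cardL : #|L| = (q ^ n)%N).

Lemma q_gt1 : (1 < q)%N.
Proof.
have := card_finNzRing_gt1 L; rewrite cardL.
by case: q => [|[|//]]; rewrite ?exp0n ?exp1n.
Qed.

Lemma exprq_n x : x ^+ (q ^ n) = x.
Proof. by rewrite -cardL expf_card. Qed.

Lemma Fq_exprq2 c : c \in Fq q -> c != 0 -> c ^+ (q - 2) = c^-1.
Proof.
move=> /Fq_exprq cq c0; apply: (mulIf c0).
rewrite mulVf // -exprSr subnSK ?q_gt1 //; apply: (mulIf c0).
by rewrite mul1r -exprSr subn1 prednK ?cq // ltnW ?q_gt1.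
Qed.

Definition geom_poly : {poly L} := \sum_(i < n) 'X^i.

Lemma Xn1_geom : 'X^n - 1 = ('X - 1) * geom_poly.
Proof. exact: subrX1. Qed.

Lemma geom_polyE : geom_poly = ('X^n - 1) %/ ('X - 1).
Proof. by rewrite Xn1_geom mulKp // -size_poly_eq0 -polyC1 size_XsubC. Qed.

Lemma size_geom_poly : size geom_poly = n.
Proof.
have := congr1 (fun p : {poly L} => size p) Xn1_geom.
rewrite -polyC1 size_XnsubC //; have [->|g0] := eqVneq geom_poly 0.
  by rewrite mulr0 size_poly0.
by rewrite size_mul ?polyXsubC_eq0 // size_XsubC; case.
Qed.

Lemma geom_poly_neq0 : geom_poly != 0.
Proof. by rewrite -size_poly_eq0 size_geom_poly -lt0n. Qed.

Lemma horner_geom_poly1 : geom_poly.[1] = n%:R.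
Proof.
rewrite horner_sum (eq_bigr (fun _ => 1)) ?sumr_const ?card_ord // => i _.
by rewrite hornerXn expr1n.
Qed.

Lemma geom_poly_over : geom_poly \is a polyOver (Fq q).
Proof. by apply: rpred_sum => i _; exact: polyOverXn. Qed.

Lemma geom_polyMX : geom_poly * 'X = geom_poly + ('X^n - 1).
Proof. by rewrite Xn1_geom mulrBl mul1r addrC subrK mulrC. Qed.

Lemma Xn1_neq0 : 'X^n - 1 != 0 :> {poly L}.
Proof. by rewrite -size_poly_eq0 -polyC1 size_XnsubC. Qed.

Lemma Xn1_over : ('X^n - 1 : {poly L}) \is a polyOver (Fq q).
Proof. by rewrite rpredB ?polyOverXn ?rpred1. Qed.

Lemma linq_geom : linq q geom_poly = \sum_(i < n) 'X^(q ^ i).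
Proof. by rewrite linear_sum; apply: eq_bigr => i _; exact: linqXn. Qed.

Lemma horner_linq_geom x : (linq q geom_poly).[x] = trace q n x.
Proof.
by rewrite linq_geom horner_sum; apply: eq_bigr => i _; rewrite hornerXn.
Qed.

Lemma linq_Xn1 x : (linq q ('X^n - 1)).[x] = 0.
Proof.
rewrite linearB /= -polyC1 linqC hornerD hornerN linqXn scale1r.
by rewrite hornerXn hornerX exprq_n subrr.
Qed.

Lemma linq_dvdp_Xn1 u x : ('X^n - 1) %| u -> (linq q u).[x] = 0.
Proof.
by move=> /dvdpP [w ->]; rewrite linq_hornerM ?Xn1_over ?linq_Xn1 ?linq_horner0.
Qed.

Lemma trace_is_nmod_morphism : nmod_morphism (@trace L q n).
Proof.
split=> [|x y]; rewrite -!horner_linq_geom; first exact: linq_horner0.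
exact: linq_hornerD.
Qed.

HB.instance Definition _ :=
  GRing.isNmodMorphism.Build L L (@trace L q n) trace_is_nmod_morphism.

Lemma traceZ c x : c \in Fq q -> trace q n (c * x) = c * trace q n x.
Proof. by move=> cFq; rewrite -!horner_linq_geom linq_hornerZ. Qed.

Lemma trace_Fq x : trace q n x \in Fq q.
Proof.
rewrite inE -!horner_linq_geom linq_horner_exprq ?geom_poly_over //.
by rewrite -linq_hornerMX geom_polyMX linearD hornerD linq_Xn1 addr0.
Qed.

Lemma trace_linq h x : h \is a polyOver (Fq q) ->
  trace q n (linq q h).[x] = h.[1] * trace q n x.
Proof.
move=> hFq; rewrite -!horner_linq_geom -linq_hornerM // mulrC.
rewrite linq_hornerM ?geom_poly_over // horner_linq_geom.
by rewrite linq_horner_Fq ?trace_Fq.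
Qed.

Lemma trace_horner f t : t \in Fq q -> trace q n f.[t] = (Tn q n f).[t].
Proof.
move=> tFq; rewrite horner_coef horner_poly raddf_sum; apply: eq_bigr => i _.
by rewrite /= mulrC traceZ ?rpredX // mulrC.
Qed.

Lemma coef_linq_expq u i : (linq q u)`_(q ^ i) = u`_i.
Proof.
have iN : (i < maxn (size u) i.+1)%N by rewrite leq_max ltnSn orbT.
rewrite (linq_widen (leq_maxl _ i.+1)) coef_sum (bigD1 (Ordinal iN)) //=.
rewrite coefZ coefXn eqxx mulr1 big1 ?addr0 // => j /negbTE ji.
by rewrite coefZ coefXn eqn_exp2l ?q_gt1 // eq_sym [_ == _]ji mulr0.
Qed.

Lemma linq_eq0 u : (linq q u == 0) = (u == 0).
Proof.
apply/eqP/eqP => [u0|->]; last exact: linear0.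
by apply/polyP => i; rewrite coef0 -coef_linq_expq u0 coef0.
Qed.

Lemma size_linq u : (size (linq q u) <= (q ^ (size u).-1).+1)%N.
Proof.
apply: leq_trans (size_sum _ _ _) _; apply/bigmax_leqP => i _.
rewrite (leq_trans (size_scale_leq _ _)) // size_polyXn ltnS.
by rewrite leq_exp2l ?q_gt1 // -ltnS (leq_trans (ltn_ord i)) // leqSpred.
Qed.

Lemma linq_nonroot u : u != 0 -> (size u <= n)%N ->
  exists z, (linq q u).[z] != 0.
Proof.
move=> u0 un; apply/existsP; apply: contraLR isT => /existsPn all0.
have /(max_poly_roots _) : all (root (linq q u)) (enum L).
  by apply/allP => z _; rewrite /root; exact: negbNE (all0 z).
move=> /(_ _ (enum_uniq L)); rewrite linq_eq0 u0 -cardT cardL => /(_ isT).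
move=> /leq_trans/(_ (size_linq u)); rewrite ltnS leq_exp2l ?q_gt1 //.
by rewrite leqNgt (leq_trans _ un) // ltn_predL size_poly_gt0.
Qed.

Lemma trace_surj t : t \in Fq q -> exists x, trace q n x = t.
Proof.
move=> tFq; have [z] := linq_nonroot geom_poly_neq0 (eq_leq size_geom_poly).
rewrite horner_linq_geom => tz0; exists (t / trace q n z * z).
by rewrite traceZ ?divfK // rpred_div ?trace_Fq.
Qed.

Lemma coprime_geom_ker h y :
    h \is a polyOver (Fq q) -> coprimep h geom_poly ->
  trace q n y = 0 -> (linq q h).[y] = 0 -> y = 0.
Proof.
move=> hFq /Bezout_coprimepP [[u v] /= /eqp_size]; rewrite size_poly1.
move=> /eqP/size_poly1P [c c0 uv] ty hy.
have := congr1 (fun w => (linq q w).[y]) uv; rewrite /= linearD hornerD.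
rewrite !linq_hornerM ?geom_poly_over // horner_linq_geom ty hy.
rewrite !linq_horner0 addr0 linqC hornerZ hornerX => /esym/eqP.
by rewrite mulf_eq0 (negbTE c0) => /eqP.
Qed.

(* y := L_e z with e = (X^n - 1) / gcd(h, Phi) is killed by L_v for every
   multiple v of the gcd, and is nonzero for a suitable z since size e <= n. *)
Lemma not_coprime_geom_ker h :
    h \is a polyOver (Fq q) -> ~~ coprimep h geom_poly ->
  exists2 y, y != 0 & trace q n y = 0 /\ (linq q h).[y] = 0.
Proof.
move=> hFq hg; set d := gcdp h geom_poly; set e := ('X^n - 1) %/ d.
have eFq : e \is a polyOver (Fq q).
  by rewrite Fq_divp ?Fq_gcdp ?Xn1_over ?geom_poly_over.
have ed : e * d = 'X^n - 1.
  by rewrite divpK // (dvdp_trans (dvdp_gcdr _ _)) // Xn1_geom dvdp_mull.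
have e0 : e != 0 by apply: contraNneq Xn1_neq0 => e0; rewrite -ed e0 mul0r.
have d0 : d != 0 by rewrite gcdp_eq0 negb_and geom_poly_neq0 orbT.
have sd : (1 < size d)%N.
  by rewrite ltn_neqAle eq_sym -coprimep_def hg lt0n size_poly_eq0.
have se : (size e <= n)%N.
  have := congr1 (fun p : {poly L} => size p) ed.
  rewrite size_mul // -polyC1 size_XnsubC //.
  case: (size d) sd => [|[|j]] // _; rewrite !addnS => -[<-].
  exact: leq_addr.
have [z ez] := linq_nonroot e0 se.
have ker v : d %| v -> (linq q v).[(linq q e).[z]] = 0.
  by move=> dv; rewrite -linq_hornerM // linq_dvdp_Xn1 // -ed mulrC dvdp_mul.
exists (linq q e).[z] => //; split; last by rewrite ker ?dvdp_gcdl.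
by rewrite -horner_linq_geom ker ?dvdp_gcdr.
Qed.

Lemma modinv_Xn1 h : n%:R = 0 :> L ->
    h \is a polyOver (Fq q) -> coprimep h geom_poly ->
  exists g, [/\ g \is a polyOver (Fq q), (size g <= n)%N
              & (h * g) %% ('X^n - 1) = 1].
Proof.
move=> n0 hFq hg; have hX : coprimep h ('X^n - 1).
  rewrite Xn1_geom coprimepMr hg andbT (coprimep_dvdl _ hg) //.
  by rewrite -polyC1 dvdp_XsubCl /root horner_geom_poly1 n0.
have [g gFq [sg hg1]] := Fq_modp_inverse Xn1_neq0 hX hFq Xn1_over.
have sX : size ('X^n - 1 : {poly L}) = n.+1 by rewrite -polyC1 size_XnsubC.
exists g; rewrite sX in sg; split => //.
by rewrite hg1 modp_small // sX size_poly1.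
Qed.

Lemma modinv_geom h : h \is a polyOver (Fq q) -> coprimep h geom_poly ->
  exists g, [/\ g \is a polyOver (Fq q), (size g <= n.-1)%N
              & (h * g) %% geom_poly = 1 %% geom_poly].
Proof.
move=> hFq hg.
have [g gFq [sg hg1]] := Fq_modp_inverse geom_poly_neq0 hg hFq geom_poly_over.
by exists g; split; rewrite // -ltnS prednK // -size_geom_poly.
Qed.

Lemma linq_congr1_Xn1 g x : g %% ('X^n - 1) = 1 -> (linq q g).[x] = x.
Proof.
move=> g1; rewrite (divp_eq g ('X^n - 1)) g1 linearD hornerD /=.
by rewrite linq_dvdp_Xn1 ?dvdp_mull // add0r -polyC1 linqC scale1r hornerX.
Qed.

Lemma linq_congr1_geom g x : n%:R != 0 :> L ->
    g %% geom_poly = 1 %% geom_poly ->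
  (linq q g).[x] + trace q n x * ((1 - g.[1]) / n%:R) = x.
Proof.
move=> n0 g1; have [n_gt1|n_le1] := ltnP 1 n; last first.
  (* For n = 1 the congruence modulo geom_poly = 1 is vacuous, but F_q = L. *)
  have n1 : n = 1%N by apply/eqP; rewrite eqn_leq n_le1.
  have tx : trace q n x = x by rewrite /trace n1 big_ord1 expn0 expr1.
  have xFq : x \in Fq q by rewrite -tx trace_Fq.
  by rewrite linq_horner_Fq // tx n1 divr1; ring.
have m1 : 1 %% geom_poly = 1 by rewrite modp_small // size_poly1 size_geom_poly.
rewrite (divp_eq g geom_poly) g1 m1 linearD hornerD /=.
rewrite linq_hornerM ?geom_poly_over // horner_linq_geom linq_horner_Fq.
  rewrite -polyC1 linqC scale1r hornerX hornerD hornerM horner_geom_poly1.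
  by rewrite hornerC; field.
exact: trace_Fq.
Qed.

Section Permutation.
Variables f k h : {poly L}.
Hypotheses (hFq : h \is a polyOver (Fq q))
  (kFq : {in Fq q, forall t, k.[t] \in Fq q /\ k.[t] != 0}).

Definition Ppoly : {poly L} :=
  f \Po (\sum_(i < n) 'X^(q ^ i))
  + (k \Po (\sum_(i < n) 'X^(q ^ i))) * linq q h.

Definition Qpoly : {poly L} := Tn q n f + k * (h.[1])%:P * 'X.

Lemma horner_Ppoly x :
  Ppoly.[x] = f.[trace q n x] + k.[trace q n x] * (linq q h).[x].
Proof. by rewrite hornerD hornerM !horner_comp -linq_geom horner_linq_geom. Qed.

Lemma trace_Ppoly x : trace q n Ppoly.[x] = Qpoly.[trace q n x].
Proof.
have [kt _] := kFq (trace_Fq x).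
rewrite horner_Ppoly raddfD /= trace_horner ?trace_Fq // traceZ ?trace_linq //.
by rewrite hornerD !hornerM hornerC hornerX mulrA.
Qed.

Lemma is_pp_coprime : is_pp Ppoly -> coprimep h geom_poly.
Proof.
move=> Pinj; apply: contraT => hg.
have [y y0 [ty hy]] := not_coprime_geom_ker hFq hg.
have : Ppoly.[y] = Ppoly.[0] by rewrite !horner_Ppoly ty raddf0 hy linq_horner0.
by move/Pinj/eqP; rewrite (negbTE y0).
Qed.

Lemma is_pp_perm_Qpoly : is_pp Ppoly -> perm_on_set (Fq q) Qpoly.
Proof.
move=> Pinj; split=> [t /trace_surj [x <-]|].
  by rewrite -trace_Ppoly trace_Fq.
apply: onto_in_inj => s /trace_surj [y <-]; have [Pinv _ PK] := injF_bij Pinj.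
by exists (trace q n (Pinv y)); rewrite ?trace_Fq // -trace_Ppoly PK.
Qed.

Lemma coprime_perm_Qpoly_is_pp :
  coprimep h geom_poly -> perm_on_set (Fq q) Qpoly -> is_pp Ppoly.
Proof.
move=> hg [_ Qinj] x y Pxy; have [_ ky0] := kFq (trace_Fq y).
have txy : trace q n x = trace q n y.
  by apply: Qinj; rewrite ?trace_Fq // -!trace_Ppoly Pxy.
move: Pxy; rewrite /= !horner_Ppoly txy => /addrI/(mulfI ky0) hxy.
apply/eqP; rewrite -subr_eq0; apply/eqP; apply: (coprime_geom_ker hFq hg).
  by rewrite raddfB /= txy subrr.
by rewrite linq_hornerB hxy subrr.
Qed.

Lemma is_pp_PpolyP :
  is_pp Ppoly <-> coprimep h geom_poly /\ perm_on_set (Fq q) Qpoly.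
Proof.
split=> [Pinj|[]]; last exact: coprime_perm_Qpoly_is_pp.
by split; [exact: is_pp_coprime | exact: is_pp_perm_Qpoly].
Qed.

Lemma linq_horner_Ppoly g x (t := trace q n x) :
  k.[t] ^+ (q - 2) * (linq q g).[Ppoly.[x]] =
  k.[t] ^+ (q - 2) * (linq q g).[f.[t]] + (linq q (h * g)).[x].
Proof.
have [kt k0] := kFq (trace_Fq x).
rewrite horner_Ppoly linq_hornerD linq_hornerZ // mulrDr mulrA Fq_exprq2 //.
by rewrite mulVf // mul1r [h * g]mulrC linq_hornerM.
Qed.

Variable R : {poly L}.
Hypothesis RQ : {in Fq q, forall t, R.[Qpoly.[t]] = t}.

Lemma R_trace_Ppoly x : R.[trace q n Ppoly.[x]] = trace q n x.
Proof. by rewrite trace_Ppoly RQ ?trace_Fq. Qed.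

Lemma Ppoly_inverse_Xn1 g F : (h * g) %% ('X^n - 1) = 1 ->
    ('X^q - 'X) %| (F + (k \Po R) ^+ (q - 2) * (linq q g \Po (f \Po R))) ->
  forall x, F.[trace q n Ppoly.[x]]
    + k.[R.[trace q n Ppoly.[x]]] ^+ (q - 2) * (linq q g).[Ppoly.[x]] = x.
Proof.
move=> hg1 dF x; have := dvdp_XqX_root (trace_Fq Ppoly.[x]) dF.
rewrite hornerD hornerM horner_exp !horner_comp R_trace_Ppoly => /eqP.
rewrite addr_eq0 => /eqP ->; rewrite linq_horner_Ppoly addrA addNr add0r.
exact: linq_congr1_Xn1.
Qed.

Lemma Ppoly_inverse_geom g F : n%:R != 0 :> L ->
    (h * g) %% geom_poly = 1 %% geom_poly ->
  let M := - (k ^+ (q - 2)) * (linq q g \Po f)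
           + 'X * ((1 - h.[1] * g.[1]) / n%:R)%:P in
  ('X^q - 'X) %| (F - (M \Po R)) ->
  forall x, F.[trace q n Ppoly.[x]]
    + k.[R.[trace q n Ppoly.[x]]] ^+ (q - 2) * (linq q g).[Ppoly.[x]] = x.
Proof.
move=> n0 hg1 M dF x; have := dvdp_XqX_root (trace_Fq Ppoly.[x]) dF.
rewrite hornerD hornerN horner_comp R_trace_Ppoly => /eqP.
rewrite subr_eq0 => /eqP ->.
rewrite linq_horner_Ppoly -[RHS](linq_congr1_geom x n0 hg1) hornerM.
by rewrite /M hornerD !hornerM hornerN horner_exp horner_comp hornerX hornerC; ring.
Qed.

End Permutation.
End Trace.
End Subfield.

Theorem theorem3p2 (L : finFieldType) (p m q n : nat)
  (hp : prime p) (hchar : p \in [pchar L]) (hm : (0 < m)%N) (hq : q = (p ^ m)%N)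
  (hn : (0 < n)%N) (hL : #|L| = (q ^ n)%N)
  (h f k : {poly L}) (hh : h \is a polyOver (Fq q))
  (hk : {in Fq q, forall x, k.[x] \in Fq q /\ k.[x] != 0}) :
  let Tr := @trace L q n in
  let P := f \Po (\sum_(i < n) 'X^(q ^ i)) + (k \Po (\sum_(i < n) 'X^(q ^ i))) * linq q h in
  let Q := Tn q n f + k * (h.[1])%:P * 'X in
  (is_pp P <-> coprimep h (('X^n - 1) %/ ('X - 1)) /\ perm_on_set (Fq q) Q)
  /\
  (is_pp P ->
   forall R : {poly L}, R \is a polyOver (Fq q) ->
   {in Fq q, forall x, R.[x] \in Fq q /\ R.[Q.[x]] = x /\ Q.[R.[x]] = x} ->
   ((p %| n)%N -> 
      (exists H : {poly L}, [/\ H \is a polyOver (Fq q), (size H <= n)%N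
         & (h * H) %% ('X^n - 1) = 1])
      /\
      forall H F : {poly L}, H \is a polyOver (Fq q) -> (size H <= n)%N ->
        (h * H) %% ('X^n - 1) = 1 ->
        ('X^q - 'X) %| (F + ((k \Po R) ^+ (q - 2)) * (linq q H \Po (f \Po R))) ->
        forall x : L,
          (F.[Tr (P.[x])] + (k.[R.[Tr (P.[x])]]) ^+ (q - 2) * (linq q H).[P.[x]]) = x)
   /\
   (~~ (p %| n)%N ->
      (exists H : {poly L}, [/\ H \is a polyOver (Fq q), (size H <= n.-1)%N
         & (h * H) %% (('X^n - 1) %/ ('X - 1)) = 1 %% (('X^n - 1) %/ ('X - 1))])
      /\
      forall H F : {poly L}, H \is a polyOver (Fq q) -> (size H <= n.-1)%N ->
        (h * H) %% (('X^n - 1) %/ ('X - 1)) = 1 %% (('X^n - 1) %/ ('X - 1)) ->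
        let M := - (k ^+ (q - 2)) * (linq q H \Po f)
                 + 'X * ((1 - h.[1] * H.[1]) / n%:R)%:P in
        ('X^q - 'X) %| (F - (M \Po R)) ->
        forall x : L,
          (F.[Tr (P.[x])] + (k.[R.[Tr (P.[x])]]) ^+ (q - 2) * (linq q H).[P.[x]]) = x)).
Proof.
have qchar : [pchar L].-nat q.
  by rewrite hq pnatX (eq_pnat _ (pcharf_eq hchar)) pnat_id.
move=> Tr P Q; rewrite -geom_polyE.
have PP := is_pp_PpolyP qchar hn hL f hh hk.
split; first exact: PP.
move=> /PP[hg _] R _ hRQ.
have RQ : {in Fq q, forall t, R.[Q.[t]] = t} by move=> t /hRQ[_ []].
rewrite (dvdn_pcharf hchar); split=> n0; split.
- exact: (modinv_Xn1 qchar hn (eqP n0) hh hg).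
- move=> H F _ _; exact: (Ppoly_inverse_Xn1 qchar hn hL hh hk RQ).
- exact: (modinv_geom qchar hn hh hg).
- move=> H F _ _ hH; exact: (Ppoly_inverse_geom qchar hn hL hh hk RQ n0 hH).
Qed.
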